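(* Let $q\ge4$ be even, let $\alpha,\beta\in\mathbb{F}_{q^2}$ with $\alpha\neq0$, $\beta\notin\mathbb{F}_q$ and $\alpha^{q+1}/(\beta^q+\beta)^2$ of absolute trace $0$, and let $R=(0,\delta,1)$. Then (1) $\mathrm{pedal}(R)$ consists exactly of the points $Q_x=(x,\,\alpha x^2+\alpha^q x^{2q}+\delta^q,\,1)$ with $x\in\mathbb{F}_{q^2}$ satisfying $1+\alpha x^2+\alpha^q x^{2q}+(\beta+\beta^q)x^{q+1}=0$; (2) the points of $\mathrm{pedal}(R)$ are contained in the lines of the Baer pencil joining the vertex $U_\infty=(1,0,0)$ to the Baer subline $\{E_{s+\delta^q}=(0,s+\delta^q,1): s\in\mathbb{F}_q\}\cup\{(0,1,0)\}$.
   Context: Points of $\mathrm{PG}(2,q^2)$ have homogeneous coordinates $(x,y,z)$. $\delta\in\mathbb{F}_{q^2}\setminus\mathbb{F}_q$ satisfies $\delta^q=1+\delta$ and $\delta^2=v+\delta$ with $v\in\mathbb{F}_q$, $v\ne1$, of absolute trace $T(v)=v+v^2+\dots+v^{2^{h-1}}=1$ where $q=2^h$. $\mathcal U_{\alpha\beta}=\{(x,\alpha x^2+\beta x^{q+1}+r,1): x\in\mathbb{F}_{q^2}, r\in\mathbb{F}_q\}\cup\{(0,1,0)\}$, which under the hypotheses is a (non-classical) unital: a set of $q^3+1$ points meeting every line in $1$ or $q+1$ points. For a point $P$ not on the unital, $\mathrm{pedal}(P)$ is the set of points of contact of the $q+1$ tangent lines (lines meeting the unital in exactly one point) through $P$.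 A Baer pencil is the set of $q+1$ lines joining a vertex point to the $q+1$ points of a Baer subline (a set of points of a line projectively equivalent to $\mathrm{PG}(1,q)$). *)

From HB Require Import structures.
From mathcomp Require Import all_boot all_order all_algebra all_field.
Set Implicit Arguments. Unset Strict Implicit. Unset Printing Implicit Defensive.
Import GRing.Theory.
Local Open Scope ring_scope.

Section PG2.
Variable F : fieldType.

(* homogeneous coordinate vectors (x, y, z) *)
Definition pt := (F * F * F)%type.
Definition mkpt (x y z : F) : pt := (x, y, z).
Definition px (p : pt) := p.1.1.
Definition py (p : pt) := p.1.2.
Definition pz (p : pt) := p.2.

Definition nonzero_pt (p : pt) : Prop := p <> mkpt 0 0 0.

Definition scale_pt (k : F) (p : pt) : pt := mkpt (k * px p) (k * py p) (k * pz p).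

(* p and p' represent the same projective point (p assumed nonzero when used) *)
Definition proj_eq (p p' : pt) : Prop := exists2 k : F, k != 0 & p' = scale_pt k p.

(* lines are given by nonzero coefficient vectors [a,b,c]: a x + b y + c z = 0 *)
Definition on_line (l p : pt) : Prop :=
  px l * px p + py l * py p + pz l * pz p = 0.

Definition det3 (a b c : pt) : F :=
  px a * (py b * pz c - pz b * py c)
  - py a * (px b * pz c - pz b * px c)
  + pz a * (px b * py c - py b * px c).

Definition collinear (a b c : pt) : Prop := det3 a b c = 0.

(* x lies in the subfield F_q (as subfield of F_{q^2}) *)
Definition inFq (q : nat) (x : F) : Prop := x ^+ q = x.

(* absolute trace of an element of F_q, q = 2^h *)
Definition abs_trace (h : nat) (x : F) : F := \sum_(i < h) x ^+ (2 ^ i).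

Definition Uab (q : nat) (alpha beta : F) (p : pt) : Prop :=
  (exists x r : F, inFq q r /\
     proj_eq (mkpt x (alpha * x ^+ 2 + beta * x ^+ (q.+1) + r) 1) p)
  \/ proj_eq (mkpt 0 1 0) p.

(* l is a tangent line to the point set U with contact point T:
   l meets U in exactly one (projective) point, namely T *)
Definition tangent_at (U : pt -> Prop) (l T : pt) : Prop :=
  nonzero_pt l /\ U T /\ on_line l T /\
  (forall P, nonzero_pt P -> U P -> on_line l P -> proj_eq T P).

Definition pedal (U : pt -> Prop) (R T : pt) : Prop :=
  exists l, tangent_at U l T /\ on_line l R.

End PG2.

(* Write Tr z = z + z^q and N x = x^(q+1).  Then
   Q x = Tr (alpha x^2) + Tr beta * N x  is an F_q-valued quadratic form on F_{q^2},
   and the trace condition on alpha^(q+1) / (beta + beta^q)^2 makes Q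
   anisotropic: a nonzero isotropic vector u would give w = alpha u / (Tr beta u^q)
   with Tr w = 1, hence abs_trace (N w) = abs_trace (w^2 + w) = w^q + w = 1.
   The line x = 0 through R = (0, delta, 1) meets the unital in (0,0,1) and (0,1,0),
   so every tangent through R is [a, 1, delta], whose affine point (x, a x + delta, 1)
   is on the unital iff Tr (a x) + Q x + 1 = 0.  Around a root x0 the other roots are
   x0 + s with Q s + Tr ((Tr beta x0^q + a) s) = 0; rescaling s by an element of F_q
   shows, by anisotropy, that x0 is the only root iff the linear term vanishes,
   i.e. a = Tr beta x0^q, and then Q x0 = 1.  The contact point is then
   (x0, Tr (alpha x0^2) + delta^q, 1), on the line joining U_oo to (0, s + delta^q, 1)
   with s = Tr (alpha x0^2) in F_q. *)

From HB Require Import structures.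
From mathcomp Require Import all_boot all_order all_algebra all_field.
From mathcomp Require Import ring.
Set Implicit Arguments.
Unset Strict Implicit.
Unset Printing Implicit Defensive.
Import GRing.Theory.
Local Open Scope ring_scope.

Section Projective.
Variable F : fieldType.
Implicit Types (P l : pt F) (x y k : F).

Lemma proj_eq_refl P : proj_eq P P.
Proof.
by exists 1; rewrite ?oner_neq0 // /scale_pt /mkpt !mul1r; case: P => [[]].
Qed.

Lemma proj_eq_sym P P' : proj_eq P P' -> proj_eq P' P.
Proof.
case=> k k0 ->; exists k^-1; rewrite ?invr_neq0 //.
by rewrite /scale_pt /mkpt /px /py /pz /= !mulrA mulVf // !mul1r; case: P => [[]].
Qed.

Lemma proj_eq_trans P P' P'' : proj_eq P P' -> proj_eq P' P'' -> proj_eq P P''.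
Proof.
case=> k k0 -> [k' k'0 ->]; exists (k' * k); first by rewrite mulf_neq0.
by rewrite /scale_pt /mkpt /px /py /pz /= !mulrA.
Qed.

Lemma on_line_proj_eq l P P' : proj_eq P P' -> on_line l P -> on_line l P'.
Proof.
case=> k _ ->; rewrite /on_line /scale_pt /px /py /pz /= => Pl.
by rewrite -[RHS](mulr0 k) -Pl; ring.
Qed.

Lemma on_line_scale l P k : k != 0 -> on_line (scale_pt k l) P <-> on_line l P.
Proof.
rewrite /on_line /scale_pt /px /py /pz /= -!mulrA -!mulrDr => k0.
by split=> [/eqP | ->]; rewrite ?mulr0 // mulf_eq0 (negbTE k0) => /eqP.
Qed.

Lemma nonzero_pt_affine x y : nonzero_pt (mkpt x y 1).
Proof. by case=> _ _ /eqP; rewrite oner_eq0. Qed.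

Lemma not_proj_eq_affine_ideal x y x' y' : ~ proj_eq (mkpt x y 1) (mkpt x' y' 0).
Proof. by case=> k k0 [_ _ /eqP]; rewrite mulr1 eq_sym (negbTE k0). Qed.

Lemma proj_eq_affine x y x' y' :
  proj_eq (mkpt x y 1) (mkpt x' y' 1) -> x = x' /\ y = y'.
Proof.
by case=> k _ [-> -> k1]; rewrite mulr1 in k1; rewrite -k1 !mul1r.
Qed.

Lemma collinear_vertex_affine x y P :
  proj_eq (mkpt x y 1) P -> collinear (mkpt 1 0 0) (mkpt 0 y 1) P.
Proof. by case=> k _ ->; rewrite /collinear /det3 /scale_pt /px /py /pz /=; ring. Qed.

End Projective.

Section Unital.
Variables (F : fieldType) (q : nat) (alpha beta : F).
Local Notation U := (Uab q alpha beta).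

Lemma Uab_affine x r :
  inFq q r -> U (mkpt x (alpha * x ^+ 2 + beta * x ^+ q.+1 + r) 1).
Proof. by move=> Fr; left; exists x, r; split; last exact: proj_eq_refl. Qed.

Lemma Uab_infty : U (mkpt 0 1 0).
Proof. by right; exact: proj_eq_refl. Qed.

Lemma Uab_proj_eq P P' : U P -> proj_eq P P' -> U P'.
Proof.
move=> [[x [r [Fr PE]]] | PE] PP'; [left; exists x, r | right].
  by split=> //; apply: proj_eq_trans PP'.
by apply: proj_eq_trans PP'.
Qed.

End Unital.

Lemma abs_trace_ArtinSchreier (F : fieldType) (n : nat) (w : F) : 2%N \in [pchar F] ->
  abs_trace n (w ^+ 2 + w) = w ^+ (2 ^ n) + w.
Proof.
move=> F2; have F2n i : [pchar F].-nat (2 ^ i)%N.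
  by rewrite (eq_pnat _ (pcharf_eq F2)) pnatX pnat_id.
rewrite /abs_trace -(big_mkord xpredT (fun i => (w ^+ 2 + w) ^+ (2 ^ i))).
rewrite (eq_bigr (fun i => w ^+ (2 ^ i.+1) - w ^+ (2 ^ i))).
  by rewrite telescope_sumr // oppr_pchar2.
by move=> i _; rewrite exprDn_pchar // -exprM -expnS oppr_pchar2.
Qed.

Section QuadraticExtension.
Variables (F : finFieldType) (h q : nat).
Hypotheses (hq : q = (2 ^ h)%N) (hF : #|F| = (q ^ 2)%N).

Lemma pchar2_quadext : 2%N \in [pchar F].
Proof. by apply: (@card_finPcharP F 2 (h * 2)); rewrite // hF hq expnM. Qed.
Let F2 := pchar2_quadext.

Let addr_eq0_2 (x y : F) : (x + y == 0) = (x == y).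
Proof. by rewrite addr_eq0 oppr_pchar2. Qed.

Lemma frobD (x y : F) : (x + y) ^+ q = x ^+ q + y ^+ q.
Proof. by rewrite exprDn_pchar // hq (eq_pnat _ (pcharf_eq F2)) pnatX pnat_id. Qed.

Lemma frobK (x : F) : (x ^+ q) ^+ q = x.
Proof. by rewrite -exprM mulnn -hF expf_card. Qed.

Lemma frob0 : (0 : F) ^+ q = 0.
Proof. by rewrite expr0n hq expn_eq0. Qed.

Definition trq (z : F) := z + z ^+ q.

Lemma trq_inFq (z : F) : inFq q (trq z).
Proof. by rewrite /inFq /trq frobD frobK addrC. Qed.

Lemma inFqE (z : F) : inFq q z <-> trq z = 0.
Proof.
rewrite /inFq /trq; split=> [-> | /eqP]; first exact: addrr_pchar2.
by rewrite addr_eq0 oppr_pchar2 // => /eqP.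
Qed.

Lemma trqZ (l z : F) : inFq q l -> trq (l * z) = l * trq z.
Proof. by move=> Fl; rewrite /trq exprMn Fl mulrDr. Qed.

Lemma trq0 : trq 0 = 0.
Proof. by rewrite /trq frob0 addr0. Qed.

Lemma trqD (x y : F) : trq (x + y) = trq x + trq y.
Proof. by rewrite /trq frobD addrACA. Qed.

Lemma trq_sqrE (a x : F) : trq (a * x ^+ 2) = a * x ^+ 2 + a ^+ q * x ^+ (2 * q).
Proof. by rewrite /trq exprMn -exprM. Qed.

Lemma inFq_norm (x : F) : inFq q (x ^+ q.+1).
Proof. by rewrite /inFq exprSr exprMn frobK mulrC. Qed.

Lemma trq_norm_abs_trace (w : F) : trq w = 1 -> abs_trace h (w ^+ q.+1) = 1.
Proof.
move=> w1; have -> : w ^+ q.+1 = w ^+ 2 + w.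
  by rewrite -{3}[w]mulr1 -w1 mulrDr -expr2 addrA addrr_pchar2 // add0r exprSr mulrC.
by rewrite abs_trace_ArtinSchreier // -hq addrC.
Qed.

Lemma trq_eq0_dual (c d : F) : d ^+ q = 1 + d ->
  trq c = 0 -> trq (c * d) = 0 -> c = 0.
Proof.
move=> dq /inFqE cq; rewrite /trq exprMn cq dq.
by rewrite mulrDr mulr1 addrCA addrr_pchar2 ?addr0.
Qed.

Section Form.
Variables (alpha beta : F).
Hypothesis hb : ~ inFq q beta.

Definition qform (x : F) := trq (alpha * x ^+ 2) + trq beta * x ^+ q.+1.

Lemma trq_beta_neq0 : trq beta != 0.
Proof. by apply/eqP => /inFqE. Qed.

Lemma qform_inFq (x : F) : inFq q (qform x).
Proof.
rewrite /inFq /qform frobD exprMn (trq_inFq beta) (inFq_norm x).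
by rewrite (trq_inFq (alpha * x ^+ 2)).
Qed.

Lemma qformD (x s : F) :
  qform (x + s) = qform x + qform s + trq (trq beta * x ^+ q * s).
Proof.
have sqrD (a b : F) : (a + b) ^+ 2 = a ^+ 2 + b ^+ 2.
  by rewrite sqrrD mulrn_pchar // addr0.
have Bq : trq beta ^+ q = trq beta := trq_inFq beta.
rewrite /qform; move: (trq beta) Bq => B Bq.
rewrite /trq !(exprSr _ q) !exprMn !frobD -!expr2 !sqrD frobK Bq; ring.
Qed.

Lemma qformZ (l u : F) : inFq q l -> qform (l * u) = l ^+ 2 * qform u.
Proof.
move=> Fl; have Fl2 : inFq q (l ^+ 2) by rewrite /inFq -exprM mulnC exprM Fl.
by rewrite /qform !exprMn mulrCA (trqZ _ Fl2) (exprSr l q) Fl; ring.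
Qed.

Hypothesis htr : abs_trace h (alpha ^+ q.+1 / (beta ^+ q + beta) ^+ 2) = 0.

Lemma qform_anisotropic (u : F) : u != 0 -> qform u != 0.
Proof.
move=> u0; apply/eqP => Qu0; move: htr; rewrite (addrC _ beta) -/(trq beta).
have Etr : alpha * u ^+ 2 + alpha ^+ q * (u ^+ q) ^+ 2 = trq beta * (u ^+ q * u).
  apply/eqP; rewrite -subr_eq0 oppr_pchar2 // -exprSr; apply/eqP.
  by rewrite -Qu0 /qform /trq exprMn -!exprM mulnC.
move: (trq beta) trq_beta_neq0 (trq_inFq beta) Etr => B B0 Bq Etr htrB.
have uq0 : u ^+ q != 0 by rewrite expf_neq0.
pose w := alpha * u / (B * u ^+ q).
have wq : w ^+ q = alpha ^+ q * u ^+ q / (B * u).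
  by rewrite /w !exprMn exprVn exprMn Bq frobK.
have w1 : trq w = 1.
  have -> : trq w = (alpha * u ^+ 2 + alpha ^+ q * (u ^+ q) ^+ 2) / (B * (u ^+ q * u)).
    by rewrite /trq wq /w; field; rewrite B0 uq0 u0.
  by rewrite Etr divff // !mulf_neq0.
have := trq_norm_abs_trace w1.
have -> : w ^+ q.+1 = alpha ^+ q.+1 / B ^+ 2.
  by rewrite exprSr wq /w exprS; field; rewrite B0 uq0 u0.
by rewrite htrB => /eqP; rewrite eq_sym oner_eq0.
Qed.

Lemma qform0 : qform 0 = 0.
Proof. by rewrite /qform !expr0n /= !mulr0 trq0 addr0. Qed.

Lemma qform_eq1P (x : F) :
  1 + alpha * x ^+ 2 + alpha ^+ q * x ^+ (2 * q) + (beta + beta ^+ q) * x ^+ q.+1 = 0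
  <-> qform x = 1.
Proof.
have -> : 1 + alpha * x ^+ 2 + alpha ^+ q * x ^+ (2 * q) + (beta + beta ^+ q) * x ^+ q.+1
    = qform x + 1 by rewrite /qform trq_sqrE /trq; ring.
by split=> [/eqP | ->]; [rewrite addr_eq0_2 => /eqP | exact: addrr_pchar2].
Qed.

Section Pedal.
Variable delta : F.
Hypothesis hdq : delta ^+ q = 1 + delta.
Local Notation U := (Uab q alpha beta).

(* The affine point (x, a x + delta, 1) of the line [a, 1, delta] through R
   lies on the unital iff [meetU a x = 0] (lemmas [Uab_meetU], [Uab_on_line]). *)
Definition meetU (a x : F) := trq (a * x) + qform x + 1.

Lemma meetUD (a x s : F) :
  meetU a (x + s) = meetU a x + qform s + trq ((trq beta * x ^+ q + a) * s).
Proof. by rewrite /meetU qformD mulrDr (mulrDl (trq beta * _)) !trqD; ring. Qed.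

Lemma meetU_tangentE (x0 x : F) :
  meetU (trq beta * x0 ^+ q) x = qform (x + x0) + qform x0 + 1.
Proof.
have xE : x = x0 + (x + x0) by rewrite addrCA addrr_pchar2 // addr0.
have /inFqE norm0 : inFq q (trq beta * x0 ^+ q.+1).
  by rewrite /inFq exprMn (trq_inFq beta) (inFq_norm x0).
rewrite {1}xE meetUD addrr_pchar2 // mul0r trq0 /meetU -mulrA -exprSr norm0.
by ring.
Qed.

Lemma meetU_unique_rootP (a x0 : F) :
  (meetU a x0 = 0 /\ forall x, meetU a x = 0 -> x = x0)
  <-> (a = trq beta * x0 ^+ q /\ qform x0 = 1).
Proof.
split=> [[root0 uniq] | [-> Q1]]; last first.
  rewrite meetU_tangentE addrr_pchar2 // qform0 Q1 add0r addrr_pchar2 //.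
  split=> // x; rewrite meetU_tangentE Q1 -addrA addrr_pchar2 // addr0 => Q0.
  apply/eqP; rewrite -addr_eq0_2; apply: (contraTT (@qform_anisotropic (x + x0))).
  by rewrite Q0.
pose c := trq beta * x0 ^+ q + a.
have trc0 u : trq (c * u) = 0.
  apply/eqP/negPn/negP => trc; have u0 : u != 0.
    by apply: contraNneq trc => ->; rewrite mulr0 trq0.
  have Qu0 := qform_anisotropic u0.
  pose l := trq (c * u) / qform u.
  have Fl : inFq q l by rewrite /inFq exprMn exprVn (trq_inFq (c * u)) (qform_inFq u).
  have lQ : l * qform u = trq (c * u) by rewrite divfK.
  have root : meetU a (x0 + l * u) = 0.
    rewrite meetUD root0 add0r qformZ // mulrCA trqZ // expr2 -mulrA lQ.
    exact: addrr_pchar2.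
  have /eqP := uniq _ root; rewrite -subr_eq0 addrC addKr mulf_eq0 (negbTE u0).
  by rewrite mulf_eq0 (negbTE trc) invr_eq0 (negbTE Qu0).
have c0 : c = 0 by apply: (trq_eq0_dual hdq); rewrite ?trc0 // -[c]mulr1 trc0.
have aE : a = trq beta * x0 ^+ q by apply/eqP; rewrite -addr_eq0_2 addrC -/c c0.
split=> //; move: root0; rewrite aE meetU_tangentE addrr_pchar2 // qform0 add0r.
by move/eqP; rewrite addr_eq0_2 => /eqP.
Qed.

Lemma trq_affine (a x : F) :
  trq (a * x + delta + (alpha * x ^+ 2 + beta * x ^+ q.+1)) = meetU a x.
Proof.
have trd : trq delta = 1 by rewrite /trq hdq addrCA addrr_pchar2 // addr0.
rewrite !trqD trd (mulrC beta) (trqZ _ (inFq_norm x)) /meetU /qform; ring.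
Qed.

Lemma Uab_meetU (a x : F) : meetU a x = 0 -> U (mkpt x (a * x + delta) 1).
Proof.
move=> root; have /(@Uab_affine _ q alpha beta x) : inFq q (a * x + delta +
  (alpha * x ^+ 2 + beta * x ^+ q.+1)) by apply/inFqE; rewrite trq_affine.
by rewrite addrC -addrA addrr_pchar2 // addr0.
Qed.

Lemma Uab_on_line (a : F) (P : pt F) : U P -> on_line (mkpt a 1 delta) P ->
  exists x, meetU a x = 0 /\ proj_eq (mkpt x (a * x + delta) 1) P.
Proof.
case=> [[x [r [Fr PE]]] | PE] lP; last first.
  have /on_line_proj_eq/(_ lP) := proj_eq_sym PE.
  by rewrite /on_line /px /py /pz /= !mulr0 mulr1 addr0 add0r => /eqP; rewrite oner_eq0.
exists x; have /on_line_proj_eq/(_ lP) := proj_eq_sym PE.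
rewrite /on_line /px /py /pz /= !mulr1 mul1r => rE.
have {rE} rE : r = a * x + delta + (alpha * x ^+ 2 + beta * x ^+ q.+1).
  by apply/eqP; rewrite -addr_eq0_2; apply/eqP; rewrite -rE; ring.
split; first by rewrite -trq_affine -rE; apply/inFqE.
suff -> : a * x + delta = alpha * x ^+ 2 + beta * x ^+ q.+1 + r by [].
by rewrite rE addrCA addrr_pchar2 // addr0.
Qed.

Lemma tangent_lineP (a : F) (T : pt F) :
  tangent_at U (mkpt a 1 delta) T <->
  exists x0, [/\ meetU a x0 = 0, forall x, meetU a x = 0 -> x = x0
               & proj_eq (mkpt x0 (a * x0 + delta) 1) T].
Proof.
have on_la x : on_line (mkpt a 1 delta) (mkpt x (a * x + delta) 1).
  by rewrite /on_line /px /py /pz /= mul1r mulr1 addrA addrr_pchar2 // add0r addrr_pchar2.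
split=> [[_ [UT [lT uniq]]] | [x0 [root0 uniq PT]]].
  have [x0 [root0 PT]] := Uab_on_line UT lT; exists x0; split=> // x rootx.
  have TP := uniq _ (@nonzero_pt_affine F _ _) (Uab_meetU rootx) (on_la x).
  by have [] := proj_eq_affine (proj_eq_trans PT TP).
split; first by case=> _ /eqP; rewrite oner_eq0.
split; first exact: Uab_proj_eq (Uab_meetU root0) PT.
split; first exact: on_line_proj_eq PT (on_la x0).
move=> P _ UP lP; have [x [rootx PxP]] := Uab_on_line UP lP.
by rewrite (uniq x rootx) in PxP; apply: proj_eq_trans (proj_eq_sym PT) PxP.
Qed.

Lemma tangent_through_R (l T : pt F) :
  tangent_at U l T -> on_line l (mkpt 0 delta 1) ->
  tangent_at U (mkpt (px l / py l) 1 delta) T.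
Proof.
case: l => [[l1 l2] l3] [lnz [UT [lT uniq]]].
rewrite /on_line /px /py /pz /= mulr0 add0r mulr1 => /eqP.
rewrite addr_eq0_2 => /eqP l3E; subst l3.
have [l20 | l2n] := eqVneq l2 0.
  subst l2; exfalso; rewrite mul0r in lnz lT uniq.
  have on_l0 P : px P = 0 -> on_line (mkpt l1 0 0) P.
    by rewrite /on_line /px /py /pz /= => ->; rewrite !mul0r mulr0 !addr0.
  have ideal_nz : nonzero_pt (mkpt 0 1 0 : pt F) by case=> /eqP; rewrite oner_eq0.
  have TO := uniq _ (@nonzero_pt_affine F _ _) (@Uab_affine F q alpha beta 0 0 frob0)
    (on_l0 (mkpt 0 _ 1) erefl).
  have TI := uniq _ ideal_nz (Uab_infty q alpha beta) (on_l0 (mkpt 0 1 0) erefl).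
  exact: not_proj_eq_affine_ideal (proj_eq_trans (proj_eq_sym TO) TI).
have lE : (l1, l2, l2 * delta) = scale_pt l2 (mkpt (l1 / l2) 1 delta).
  by rewrite /scale_pt /px /py /pz /= mulr1 (mulrC l2 (l1 / l2)) divfK.
rewrite /px /py /=; rewrite lE in lT uniq.
split; first by case=> _ /eqP; rewrite oner_eq0.
split=> //; split; first exact/(on_line_scale _ _ l2n).
by move=> P Pnz UP lP; apply: uniq => //; apply/(on_line_scale _ _ l2n).
Qed.

Lemma pedal_tangentP (T : pt F) :
  pedal U (mkpt 0 delta 1) T <-> exists a, tangent_at U (mkpt a 1 delta) T.
Proof.
split=> [[l [tl lR]] | [a ta]]; first by exists (px l / py l); apply: tangent_through_R.
exists (mkpt a 1 delta); split=> //.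
by rewrite /on_line /px /py /pz /= mulr0 add0r mul1r mulr1 addrr_pchar2.
Qed.

Lemma pedal_contactP (T : pt F) :
  pedal U (mkpt 0 delta 1) T <->
  exists x0, qform x0 = 1 /\ proj_eq (mkpt x0 (trq beta * x0 ^+ q.+1 + delta) 1) T.
Proof.
rewrite pedal_tangentP; split=> [[a /tangent_lineP [x0 [root0 uniq PT]]] | [x0 [Q1 PT]]].
  have [aE Q1] := (meetU_unique_rootP a x0).1 (conj root0 uniq).
  by exists x0; rewrite aE -mulrA -exprSr in PT.
have [root0 uniq] := (meetU_unique_rootP _ x0).2 (conj erefl Q1).
by exists (trq beta * x0 ^+ q); apply/tangent_lineP; exists x0; rewrite -mulrA -exprSr.
Qed.

Lemma contact_ordinateE (x0 : F) : qform x0 = 1 ->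
  trq beta * x0 ^+ q.+1 + delta = trq (alpha * x0 ^+ 2) + delta ^+ q.
Proof.
move=> Q1; rewrite hdq -Q1 /qform.
have two0 : (2%:R : F) = 0 by rewrite pcharf0.
by ring: two0.
Qed.

End Pedal.
End Form.
End QuadraticExtension.

Theorem lemma3p2 (F : finFieldType) (h q : nat) (delta v alpha beta : F)
  (hq : q = (2 ^ h)%N) (hh : (2 <= h)%N) (hF : #|F| = (q ^ 2)%N)
  (hdq : delta ^+ q = 1 + delta) (hd2 : delta ^+ 2 = v + delta)
  (hvq : inFq q v) (hv1 : v != 1) (hTv : abs_trace h v = 1)
  (ha0 : alpha != 0) (hb : ~ inFq q beta)
  (htr : abs_trace h (alpha ^+ q.+1 / (beta ^+ q + beta) ^+ 2) = 0) :
  let U := Uab q alpha beta in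
  let R := mkpt 0 delta 1 in
  (forall T : pt F,
     pedal U R T <->
     exists x : F,
       1 + alpha * x ^+ 2 + alpha ^+ q * x ^+ (2 * q) + (beta + beta ^+ q) * x ^+ q.+1 = 0
       /\ proj_eq (mkpt x (alpha * x ^+ 2 + alpha ^+ q * x ^+ (2 * q) + delta ^+ q) 1) T)
  /\
  (forall T : pt F, pedal U R T ->
     exists E : pt F,
       ((exists s : F, inFq q s /\ E = mkpt 0 (s + delta ^+ q) 1) \/ E = mkpt 0 1 0)
       /\ collinear (mkpt 1 0 0) E T).
Proof.
move=> U R.
have pedalP T : pedal U R T <-> exists x, qform q alpha beta x = 1 /\
    proj_eq (mkpt x (trq q (alpha * x ^+ 2) + delta ^+ q) 1) T.
  rewrite (pedal_contactP hq hF hb htr hdq); split=> -[x [Q1 PT]]; exists x;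
    by rewrite (contact_ordinateE hq hF hdq Q1) in PT *.
split=> T.
  rewrite pedalP; split=> -[x [Q1 PT]]; exists x;
    by rewrite (qform_eq1P hq hF) -(trq_sqrE q) in Q1 PT *.
case/pedalP=> x [_ PT]; exists (mkpt 0 (trq q (alpha * x ^+ 2) + delta ^+ q) 1).
split; last exact: collinear_vertex_affine PT.
by left; exists (trq q (alpha * x ^+ 2)); split=> //; apply: (trq_inFq hq hF).
Qed.
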